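(* Let $X$ be a continuum and $T\subset X$ a thick subcontinuum. Then $T$ contains every null-aposyndetic point of $X$.
   Context: A continuum is a nondegenerate compact connected Hausdorff space. A subcontinuum $T\subset X$ is thick if $T\neq X$ and $T$ has nonempty interior. A point $x\in X$ is null-aposyndetic if no proper subcontinuum of $X$ contains $x$ in its interior. *)

From HB Require Import structures.
From mathcomp Require Import all_boot all_order all_algebra.
From mathcomp Require Import all_classical all_reals all_analysis.
Set Implicit Arguments. Unset Strict Implicit. Unset Printing Implicit Defensive.
Local Open Scope classical_set_scope.

Definition continuum (X : topologicalType) : Prop :=
  [/\ hausdorff_space X, compact [set: X], connected [set: X]
    & exists a b : X, a <> b].

(* A subcontinuum: a subset which is itself a continuum (subspace topology):
   nondegenerate, compact, connected (Hausdorffness is inherited). *)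
Definition subcontinuum (X : topologicalType) (A : set X) : Prop :=
  [/\ compact A, connected A & exists a b, A a /\ A b /\ a <> b].

Definition thick (X : topologicalType) (T : set X) : Prop :=
  [/\ subcontinuum T, T != [set: X] & (interior T) !=set0].

Definition null_aposyndetic (X : topologicalType) (x : X) : Prop :=
  forall A : set X, subcontinuum A -> A != [set: X] -> ~ (interior A) x.

From mathcomp Require Import all_boot all_order all_algebra.
From mathcomp Require Import all_classical all_reals all_analysis.
Local Open Scope classical_set_scope.

(** Suppose [x] lies outside [T]; let [Z] be the complement of the interior
    of [T] and [Q] the quasi-component of [x] in [Z]. For every piece [K] of
    [Z] that is clopen in [Z] and contains [x], the set [T `|` K] is a
    subcontinuum containing [x] in its interior (both its connectedness and
    this interior point come from the open set [~` T `&` ~` (Z `\` K)]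
    lying inside it), so null-aposyndeticity forces [T `|` K = X]. Hence
    [~` T `<=` Q]. In a compact Hausdorff space quasi-components of closed
    sets are connected, so [Q] is a proper subcontinuum with [x] in its
    interior: a contradiction. *)

Section topology_facts.
Context {X : topologicalType}.
Implicit Types A B C K P R S U V W Z : set X.

Lemma connected_clopen_setT B : connected [set: X] ->
  B !=set0 -> clopen B -> B = [set: X].
Proof.
move=> hconn B0 [oB cB]; apply: hconn => //.
  by exists B => //; rewrite setTI.
by exists B => //; rewrite setTI.
Qed.

Lemma connected_open_exists_neq U (x : X) :
  connected [set: X] -> accessible_space X -> (exists a b : X, a <> b) ->
  open U -> U x -> exists2 y, U y & y <> x.
Proof.
move=> hconn hacc [a [b ab]] oU Ux; apply: contrapT => no_other.
have Ux1 : U = [set x].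
  apply/seteqP; split=> [y Uy|_ ->//]; apply: contrapT => yx.
  by apply: no_other; exists y.
have UT : U = [set: X].
  apply: connected_clopen_setT => //; first by exists x.
  by split=> //; rewrite Ux1; exact: accessible_closed_set1.
have ax : a = x by rewrite -[_ = _]/([set x] a) -Ux1 UT.
have bx : b = x by rewrite -[_ = _]/([set x] b) -Ux1 UT.
by apply: ab; rewrite ax bx.
Qed.

Lemma separated_closedUr A B : separated A B -> closed (A `|` B) -> closed B.
Proof.
move=> [_ AclB] cAB y clBy.
have [Ay|//] : (A `|` B) y by apply: cAB; apply: closureS clBy => z; right.
by have : (A `&` closure B) y by []; rewrite AclB.
Qed.

Lemma compact_hausdorff_separate A B :
  hausdorff_space X -> compact [set: X] -> closed A -> closed B ->
  A `&` B = set0 ->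
  exists U V, [/\ open U, open V, A `<=` U, B `<=` V & U `&` V = set0].
Proof.
move=> hH hc cA cB AB0.
have AnB : set_nbhs A (~` B).
  apply/set_nbhsP; exists (~` B); split => //; first exact: closed_openC.
  by move=> y Ay By; have : (A `&` B) y by []; rewrite AB0.
have [D /set_nbhsP[U [oU AU UD]] clDnB] := compact_normal hH hc cA AnB.
exists U, (~` closure D); split => //.
- exact/closed_openC/closed_closure.
- by move=> y By /clDnB.
- by rewrite -subset0 => y [Uy]; apply; apply: subset_closure; exact: UD.
Qed.

Lemma connected_separation_trivial A S : connected S -> S `<=` A ->
  (forall P R, separated P R -> A = P `|` R -> S `<=` P -> R = set0) ->
  connected A.
Proof.
move=> cS SA trivial_sep; apply/connectedP => E [E0 AE sepE].
have SE : S `<=` E false `|` E true by rewrite -AE.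
have [SEf|SEt] := connected_subset sepE SE cS.
  by have [y] := E0 true; rewrite (trivial_sep _ _ sepE AE SEf).
have [y] := E0 false; rewrite (trivial_sep (E true) (E false)) //.
  by rewrite separatedC.
by rewrite AE setUC.
Qed.

Lemma connected_closed_superset S C : connected [set: X] ->
  connected S -> S !=set0 -> S `<=` C -> closed C -> C `\` S `<=` C° ->
  connected C.
Proof.
move=> hconn cS [s Ss] SC cC CSint.
apply: (connected_separation_trivial _ _ cS SC) => A B sepAB CAB SA.
have [clAB0 _] := sepAB; have AB0 := separated_disjoint sepAB.
rewrite -subset0 => b Bb.
have BT : B = [set: X].
  apply: connected_clopen_setT => //; first by exists b.
  split; last by apply: (separated_closedUr _ _ sepAB); rewrite -CAB.
  have -> : B = C° `&` ~` closure A.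
    apply/seteqP; split=> y.
      move=> By; split; last first.
        by move=> clAy; have : (closure A `&` B) y by []; rewrite clAB0.
      apply: CSint; split; first by rewrite CAB; right.
      by move=> /SA Ay; have : (A `&` B) y by []; rewrite AB0.
    move=> [/interior_subset + nclAy]; rewrite CAB => -[Ay|//].
    by exfalso; apply: nclAy; exact: subset_closure.
  by apply: openI; [exact: open_interior | exact/closed_openC/closed_closure].
have : (A `&` B) s by split; [exact: SA | rewrite BT].
by rewrite AB0.
Qed.

Lemma compact_bigcap_sub_open (F : set (set X)) W : compact [set: X] ->
  (forall K, F K -> closed K) -> F !=set0 -> setI_closed F -> open W ->
  \bigcap_(K in F) K `<=` W -> exists2 K, F K & K `<=` W.
Proof.
move=> hc Fcl [K0 FK0] FI oW FW; apply: contrapT => noK.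
have meetWC K : F K -> K `&` ~` W !=set0.
  move=> FK; apply/set0P/eqP => KW0.
  apply: noK; exists K => // y Ky; apply: contrapT => nWy.
  by have : (K `&` ~` W) y by []; rewrite KW0.
pose G := filter_from F (fun K => K `&` ~` W).
have GF : Filter G.
  apply: filter_from_filter; first by exists K0.
  by move=> K1 K2 FK1 FK2; exists (K1 `&` K2); [exact: FI | move=> y [[]]].
have [p [_ Gp]] := hc G (filter_from_proper GF meetWC) filterT.
have KWp K : F K -> (K `&` ~` W) p.
  move=> FK; apply: (closedI (Fcl K FK) (open_closedC oW)).
  by rewrite clusterE in Gp; apply: Gp; exists K.
have [_ nWp] := KWp K0 FK0.
by apply: nWp; apply: FW => K /KWp[].
Qed.

(** For closed [Z], [clopen_in Z K] says that [K] is clopen in the subspace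
    [Z]. *)
Definition clopen_in Z K := [/\ K `<=` Z, closed K & closed (Z `\` K)].

Definition quasi_component Z (x : X) :=
  \bigcap_(K in [set K | clopen_in Z K /\ K x]) K.

Lemma clopen_in_refl Z : closed Z -> clopen_in Z Z.
Proof. by move=> cZ; split => //; rewrite setDv; exact: closed0. Qed.

Lemma clopen_inI Z : setI_closed (clopen_in Z).
Proof.
move=> K1 K2 [K1Z c1 d1] [_ c2 d2]; split.
- by move=> y [/K1Z].
- exact: closedI.
- by rewrite setDIr; exact: closedU.
Qed.

Lemma clopen_in_setI_open Z K U V : clopen_in Z K -> open U -> open V ->
  U `&` V = set0 -> K `<=` U `|` V -> clopen_in Z (K `&` U).
Proof.
move=> [KZ cK cZK] oU oV UV0 KUV; split.
- by move=> y [/KZ].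
- have -> : K `&` U = K `&` ~` V.
    apply/seteqP; split=> y [Ky].
      by move=> Uy; split=> // Vy; have : (U `&` V) y by []; rewrite UV0.
    by move=> nVy; split=> //; case: (KUV y Ky) => // /nVy.
  by apply: closedI => //; exact: open_closedC.
- have -> : Z `\` (K `&` U) = (Z `\` K) `|` (K `&` ~` U).
    apply/seteqP; split=> y.
      move=> [Zy nKUy]; have [Ky|nKy] := pselect (K y); last by left.
      by right; split=> // Uy; apply: nKUy.
    by case=> [[Zy nKy]|[/[dup] /KZ Zy Ky nUy]]; split=> // -[].
  by apply: closedU => //; apply: closedI => //; exact: open_closedC.
Qed.

Lemma quasi_componentxx Z (x : X) : quasi_component Z x x.
Proof. by move=> K []. Qed.

Lemma quasi_component_sub Z (x : X) :
  closed Z -> Z x -> quasi_component Z x `<=` Z.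
Proof. by move=> cZ Zx y; apply; split; [exact: clopen_in_refl|]. Qed.

Lemma quasi_component_closed Z (x : X) : closed (quasi_component Z x).
Proof. by apply: closed_bigI => K [[]]. Qed.

Lemma quasi_component_connected Z (x : X) :
  hausdorff_space X -> compact [set: X] -> closed Z -> Z x ->
  connected (quasi_component Z x).
Proof.
move=> hH hc cZ Zx; set Q := quasi_component Z x.
have cQ : closed Q := quasi_component_closed Z x.
apply: (connected_separation_trivial _ _ (@connected1 _ x)).
  by move=> _ ->; exact: quasi_componentxx.
move=> A B sepAB QAB xA.
have cA : closed A.
  by apply: (separated_closedUr B); [rewrite separatedC | rewrite setUC -QAB].
have cB : closed B by apply: (separated_closedUr _ _ sepAB); rewrite -QAB.
have [U [V [oU oV AU BV UV0]]] :=
  compact_hausdorff_separate _ _ hH hc cA cB (separated_disjoint sepAB).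
have [K [clK Kx] KUV] : exists2 K, clopen_in Z K /\ K x & K `<=` U `|` V.
  apply: compact_bigcap_sub_open => //.
  - by move=> K [[]].
  - by exists Z; split; [exact: clopen_in_refl|].
  - by move=> K1 K2 [c1 x1] [c2 x2]; split; [exact: clopen_inI|].
  - exact: openU.
  - move=> y Qy; have : (A `|` B) y by rewrite -QAB.
    by case=> [/AU|/BV]; [left|right].
have QKU : Q `<=` K `&` U.
  move=> y; apply; split; last by split; [|apply: AU; exact: xA].
  exact: (clopen_in_setI_open _ _ _ _ clK oU oV UV0 KUV).
rewrite -subset0 => y By.
have [_ Uy] : (K `&` U) y by apply: QKU; rewrite QAB; right.
have : (U `&` V) y by split=> //; exact: BV.
by rewrite UV0.
Qed.

Lemma setU_clopen_in_interior T K : closed T -> clopen_in (~` T°) K ->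
  ~` T `&` ~` (~` T° `\` K) `<=` (T `|` K)°.
Proof.
move=> cT [_ _ cZK]; rewrite -open_subsetE; last first.
  by apply: openI; exact: closed_openC.
move=> y [nTy nZKy]; right; apply: contrapT => nKy.
by apply: nZKy; split=> // /interior_subset.
Qed.

End topology_facts.

Section outside_thick_subcontinuum.
Context {X : topologicalType} {T : set X} {x : X}.
Hypotheses (hX : continuum X) (hT : thick T) (hx : null_aposyndetic x)
  (nTx : ~ T x).

Lemma setC_thick_sub_clopen_in K : clopen_in (~` T°) K -> K x -> ~` T `<=` K.
Proof.
move=> clK Kx; have [hH hc hconn _] := hX.
have [[cT connT [a [b [Ta [Tb ab]]]]] _ _] := hT.
have clT := compact_closed hH cT; have [_ cK _] := clK.
have TKint := setU_clopen_in_interior _ _ clT clK.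
suff TKT : T `|` K = [set: X].
  move=> y nTy; have : (T `|` K) y by rewrite TKT.
  by case.
apply: contrapT => /eqP TKneq; apply: (hx (T `|` K)) => //.
  split.
  - by apply: compactU => //; exact: subclosed_compact cK hc _.
  - apply: (connected_closed_superset _ _ hconn connT _ _ (closedU clT cK)).
    + by exists a.
    + by move=> y Ty; left.
    + move=> y [[//|Ky] nTy]; apply: TKint; split=> //.
      by move=> [_ /(_ Ky)].
  - by exists a, b; split; [left | split; [left|]].
by apply: TKint; split=> // -[_ /(_ Kx)].
Qed.

Lemma setC_thick_sub_quasi_component : ~` T `<=` quasi_component (~` T°) x.
Proof. by move=> y nTy K [clK Kx]; exact: setC_thick_sub_clopen_in. Qed.

End outside_thick_subcontinuum.

Theorem mainTheorem16 (X : topologicalType) (hX : continuum X) (T : set X)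
  (hT : thick T) (x : X) (hx : null_aposyndetic x) : T x.
Proof.
apply: contrapT => nTx.
have [hH hc hconn nondeg] := hX.
have [[cT _ _] _ [z Tz]] := hT.
set Z := ~` T°; set Q := quasi_component Z x.
have cZ : closed Z := open_closedC (open_interior T).
have Zx : Z x by move=> /interior_subset.
have TQ : ~` T `<=` Q := setC_thick_sub_quasi_component hX hT hx nTx.
have oTC : open (~` T) := closed_openC (compact_closed hH cT).
have [y nTy yx] := connected_open_exists_neq _ _ hconn (hausdorff_accessible hH)
  nondeg oTC nTx.
apply: (hx Q).
- split.
  + exact: subclosed_compact (quasi_component_closed Z x) hc _.
  + exact: quasi_component_connected.
  + exists x, y; split; first exact: quasi_componentxx.
    by split; [exact: TQ | exact/nesym].
- apply/eqP => QT; have : Q z by rewrite QT.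
  by move/(quasi_component_sub _ _ cZ Zx); apply.
- by move: TQ; rewrite open_subsetE //; apply.
Qed.
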